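(* Let $(\mathcal A,\mathcal T,(-))$ be a meta-tangible $\mathcal T$-monoid module triple with identity $\mathbb 1\in\mathcal T$, and put $e=\mathbb 1(-)\mathbb 1$, $e'=e+\mathbb 1$, $\mathbf 3=\mathbb 1+\mathbb 1+\mathbb 1$. Then exactly one of the following holds: (i) $e'\in\mathcal T$, and then $e'=\mathbb 1$; (ii) $e'\in\mathcal T^\circ$, and then $e'=e$; (iii) $e'\notin\mathcal T\cup\mathcal T^\circ$, and then $(-)\mathbb 1=\mathbb 1$ and $e'=\mathbf 3$.
   Context: $(\mathcal A,+,\mathbb 0)$ commutative monoid, $\mathcal T\subseteq\mathcal A\setminus\{\mathbb 0\}$. A negation map is $(-):\mathcal A\to\mathcal A$ with $(-)(b_1+b_2)=(-)b_1+(-)b_2$, $(-)((-)b)=b$, $(-)\mathbb 0=\mathbb 0$, $(-)\mathcal T\subseteq\mathcal T$. Write $b(-)c:=b+((-)c)$, $b^\circ:=b(-)b$, $\mathcal A^\circ=\{b^\circ:b\in\mathcal A\}$, $\mathcal T^\circ=\{a^\circ:a\in\mathcal T\}$. A $\mathcal T$-triple $(\mathcal A,\mathcal T,(-))$: such data with an action $\mathcal T\times\mathcal A\to\mathcal A$ satisfying $a(b_1+b_2)=ab_1+ab_2$, $a\mathbb 0=\mathbb 0$, $(-)(ab)=((-)a)b=a((-)b)$, with $\mathcal T\cap\mathcal A^\circ=\emptyset$ and every element of $\mathcal A$ a finite sum of elements of $\mathcal T$. It is a $\mathcal T$-monoid module triple if moreover $\mathcal T$ is a monoid with identity $\mathbb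 1$ whose multiplication is the restriction of the action, $\mathbb 1b=b$ and $(a_1a_2)b=a_1(a_2b)$. The triple is meta-tangible if $a+b\in\mathcal T$ for all $a,b\in\mathcal T$ with $b\neq(-)a$. *)

From Stdlib Require Import List.
Import ListNotations.

(* The set T is a predicate on A; the
   action T x A -> A is given by a total function [act : A -> A -> A] whose
   axioms are only imposed when the first argument lies in T. *)
Record TMonoidModuleTriple := {
  car :> Type;
  add : car -> car -> car;
  zero : car;
  tang : car -> Prop;
  neg : car -> car;
  act : car -> car -> car;
  one : car;
  addA : forall x y z, add x (add y z) = add (add x y) z;
  addC : forall x y, add x y = add y x;
  add0 : forall x, add zero x = x;
  tang_nz : forall a, tang a -> a <> zero;
  negD : forall b1 b2, neg (add b1 b2) = add (neg b1) (neg b2);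
  negK : forall b, neg (neg b) = b;
  neg0 : neg zero = zero;
  neg_tang : forall a, tang a -> tang (neg a);
  actD : forall a b1 b2, tang a -> act a (add b1 b2) = add (act a b1) (act a b2);
  act0 : forall a, tang a -> act a zero = zero;
  act_negl : forall a b, tang a -> neg (act a b) = act (neg a) b;
  act_negr : forall a b, tang a -> neg (act a b) = act a (neg b);
  tang_not_circ : forall a b, tang a -> a <> add b (neg b);
  tang_span : forall b, exists l : list car,
      Forall tang l /\ b = fold_right add zero l;
  (* T is a monoid with identity 1 whose multiplication is the action *)
  tang_one : tang one;
  tang_mul : forall a1 a2, tang a1 -> tang a2 -> tang (act a1 a2);
  act1 : forall b, act one b = b;
  mul1r : forall a, tang a -> act a one = a;
  actA : forall a1 a2 b, tang a1 -> tang a2 -> act (act a1 a2) b = act a1 (act a2 b)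
}.

Definition sub {A : TMonoidModuleTriple} (b c : A) : A := add A b (neg A c).
Definition circ {A : TMonoidModuleTriple} (b : A) : A := sub b b.
Definition in_tang_circ {A : TMonoidModuleTriple} (x : A) : Prop :=
  exists a, tang A a /\ x = circ a.

Definition meta_tangible (A : TMonoidModuleTriple) : Prop :=
  forall a b : A, tang A a -> tang A b -> b <> neg A a -> tang A (add A a b).

From Stdlib Require Import Classical.

(* Everything rests on one consequence of meta-tangibility: if [x (-) y] lies
   in A° for tangible [x], [y], then [x = y], since otherwise [x + (-)y] would
   be tangible.  With [m = (-)1]: if [m <> 1] then [1 + 1] is tangible, and
   either [m + m = m] (so [1 + 1 = 1] and [e' = e]) or [e' = (1 + 1) + m] is
   tangible with [e' (-) 1 = (1 + 1)°], whence [e' = 1].  If [m = 1] then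
   [e' = 3], and [3 (-) 1 = (1 + 1)°] gives [3 = 1] when [3] is tangible; when
   [3 = a°] with [a] tangible, [(1 + a) (-) a = (1 + 1)°] forces [a = 1], the
   alternative [1 + a = a] being impossible because it makes
   [a = a 3 = a a° = (a a)°]. *)

Section MetaTangibleTriple.

Variable A : TMonoidModuleTriple.

Lemma neg_inj (x y : A) : neg A x = neg A y -> x = y.
Proof.
  intros Hxy. rewrite <- (negK A x), <- (negK A y), Hxy. reflexivity.
Qed.

Lemma tang_not_in_tang_circ (x : A) : tang A x -> ~ in_tang_circ x.
Proof.
  intros Tx [a [_ Hx]]. exact (tang_not_circ A x a Tx Hx).
Qed.

Lemma neg_tang_of_neg_one (a : A) :
  neg A (one A) = one A -> tang A a -> neg A a = a.
Proof.
  intros Hm Ta.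
  rewrite <- (mul1r A a Ta) at 1.
  rewrite (act_negr A a (one A) Ta), Hm.
  exact (mul1r A a Ta).
Qed.

Lemma act_circ (a b : A) : tang A a -> act A a (circ b) = circ (act A a b).
Proof.
  intros Ta. unfold circ, sub.
  rewrite (actD A a _ _ Ta), (act_negr A a b Ta). reflexivity.
Qed.

Hypothesis hmt : meta_tangible A.

Lemma meta_tangible_sub_circ (x y c : A) :
  tang A x -> tang A y -> sub x y = circ c -> x = y.
Proof.
  intros Tx Ty Hxy.
  destruct (classic (neg A y = neg A x)) as [Hn | Hn].
  - exact (neg_inj x y (eq_sym Hn)).
  - exfalso.
    apply (tang_not_circ A (sub x y) c); [| exact Hxy].
    exact (hmt x (neg A y) Tx (neg_tang A y Ty) Hn).
Qed.

Section NegOneNontrivial.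

Hypothesis Hm : neg A (one A) <> one A.

Lemma tang_one_add_one : tang A (add A (one A) (one A)).
Proof.
  exact (hmt _ _ (tang_one A) (tang_one A) (not_eq_sym Hm)).
Qed.

Lemma circ_one_add_one_cases :
  let e := circ (one A) in
  let e' := add A e (one A) in
  (tang A e' /\ e' = one A) \/ (in_tang_circ e' /\ e' = e).
Proof.
  intros e e'.
  set (u := one A) in *. set (m := neg A u).
  assert (Tu : tang A u) by exact (tang_one A).
  assert (Tm : tang A m) by exact (neg_tang A u Tu).
  assert (He' : e' = add A (add A u u) m).
  { unfold e', e, circ, sub. fold m.
    rewrite (addC A (add A u m)), addA. reflexivity. }
  destruct (classic (m = add A m m)) as [Hmm | Hmm].
  - assert (Huu : u = add A u u).
    { apply neg_inj. rewrite negD. exact Hmm. }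
    right. rewrite He', <- Huu.
    split; [exists u; split; [exact Tu | reflexivity] | reflexivity].
  - assert (Te' : tang A e').
    { rewrite He'. apply (hmt _ _ tang_one_add_one Tm).
      rewrite negD. exact Hmm. }
    left. split; [exact Te' |].
    apply (meta_tangible_sub_circ e' u (add A u u) Te' Tu).
    rewrite He'. unfold circ, sub. fold m.
    rewrite negD. fold m. rewrite <- addA. reflexivity.
Qed.

End NegOneNontrivial.

Section NegOneTrivial.

Hypothesis Hm : neg A (one A) = one A.

Let three := add A (add A (one A) (one A)) (one A).

Lemma circ_one_add_one_eq_three : add A (circ (one A)) (one A) = three.
Proof.
  unfold circ, sub. rewrite Hm. reflexivity.
Qed.

Lemma tang_three_eq_one : tang A three -> three = one A.
Proof.
  intros T3.
  apply (meta_tangible_sub_circ three (one A) (add A (one A) (one A)) T3 (tang_one A)).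
  unfold three, circ, sub. rewrite negD, Hm, !addA. reflexivity.
Qed.

Lemma in_tang_circ_three_eq : in_tang_circ three -> three = circ (one A).
Proof.
  intros [a [Ta H3]].
  set (u := one A) in *.
  assert (Tu : tang A u) by exact (tang_one A).
  assert (Hna : neg A a = a) by exact (neg_tang_of_neg_one a Hm Ta).
  assert (H3' : three = add A a a) by (rewrite H3; unfold circ, sub; rewrite Hna; reflexivity).
  destruct (classic (a = u)) as [Hau | Hau]; [rewrite H3, Hau; reflexivity |].
  exfalso.
  assert (Tua : tang A (add A u a)).
  { apply (hmt u a Tu Ta). fold u. rewrite Hm. exact Hau. }
  assert (Hua : add A u a = a).
  { apply (meta_tangible_sub_circ (add A u a) a (add A u u) Tua Ta).
    unfold circ, sub. rewrite Hna, negD. fold u. rewrite Hm.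
    rewrite <- addA, <- H3'. unfold three.
    rewrite (addC A u), <- !addA. reflexivity. }
  assert (Ha3 : a = act A a three).
  { unfold three. rewrite !(actD A a _ _ Ta), (mul1r A a Ta : act A a u = a).
    rewrite <- H3'. unfold three.
    rewrite <- !addA, !Hua. reflexivity. }
  rewrite H3, (act_circ a a Ta) in Ha3.
  exact (tang_not_circ A a (act A a a) Ta Ha3).
Qed.

End NegOneTrivial.

End MetaTangibleTriple.

Theorem proposition7p2 (A : TMonoidModuleTriple) (hmt : meta_tangible A) :
  let e := circ (one A) in
  let e' := add A e (one A) in
  let three := add A (add A (one A) (one A)) (one A) in
  ~ (tang A e' /\ in_tang_circ e') /\
  ((tang A e' /\ e' = one A) \/
   (in_tang_circ e' /\ e' = e) \/
   (~ tang A e' /\ ~ in_tang_circ e' /\ neg A (one A) = one A /\ e' = three)).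
Proof.
  intros e e' three.
  split; [intros [Te' Ce']; exact (tang_not_in_tang_circ A e' Te' Ce') |].
  destruct (classic (neg A (one A) = one A)) as [Hm | Hm].
  - assert (He' : e' = three) by exact (circ_one_add_one_eq_three A Hm).
    rewrite He'.
    destruct (classic (tang A three)) as [T3 | T3].
    { left. exact (conj T3 (tang_three_eq_one A hmt Hm T3)). }
    destruct (classic (in_tang_circ three)) as [C3 | C3].
    { right; left. exact (conj C3 (in_tang_circ_three_eq A hmt Hm C3)). }
    right; right. auto.
  - destruct (circ_one_add_one_cases A hmt Hm); auto.
Qed.
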